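(* Let $F$ and $G$ be the distribution functions of laws $P$ and $Q$ on $\mathbb R$ such that $P(\mathbb Z)=1$, $G$ is continuous and strictly increasing, and $P$ and $Q$ are both symmetric about $\frac n2$ for some $n\in\mathbb R$. Let $d:=F(\lfloor\frac n2\rfloor)-G(\lfloor\frac n2\rfloor)$. Then $n\in\mathbb Z$, $d=G(\lceil\frac n2\rceil-)-F(\lceil\frac n2\rceil-)$, and $$d=\begin{cases}G(\frac{n+1}2)-\frac12,& n\text{ odd},\\ \frac12P(\{\frac n2\}),& n\text{ even}.\end{cases}$$ Furthermore, the statement ''for every $s\in\mathbb R$: $|F(s)-G(s)|<d$ if $s\ne\lfloor\frac n2\rfloor$, and $|F(s-)-G(s-)|<d$ if $s\ne\lceil\frac n2\rceil$'' holds iff both of the following hold: $$F(s)-G(s)<d\ \text{ for all } s\in\mathbb Z \text{ with } s>\lfloor\tfrac n2\rfloor,\qquad G(s)-F(s-1)<d\ \text{ for all } s\in\mathbb Z\text{ with } s>\lceil\tfrac n2\rceil.$$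
   Context: $F(s-)$ denotes the left limit of $F$ at $s$. A distribution function is $F(s)=P(]-\infty,s])$. *)

From HB Require Import structures.
From mathcomp Require Import all_boot all_order all_algebra.
From mathcomp Require Import all_classical all_reals all_analysis.
Set Implicit Arguments. Unset Strict Implicit. Unset Printing Implicit Defensive.
Import Order.TTheory GRing.Theory Num.Theory.
Import numFieldNormedType.Exports.
Local Open Scope classical_set_scope.
Local Open Scope ring_scope.

Definition distfun (R : realType) (P : probability R R) (s : R) : R :=
  fine (P [set` `]-oo, s]]).

Definition left_lim (R : realType) (f : R -> R) (s : R) : R :=
  lim (f x @[x --> s^'-]).

Definition symmetric_about (R : realType) (P : probability R R) (c : R) : Prop :=
  forall A : set R, measurable A -> P A = P ((fun x => 2 * c - x) @^-1` A).

Definition intset (R : realType) : set R := [set x | exists k : int, x = k%:~R].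

From HB Require Import structures.
From mathcomp Require Import all_boot all_order all_algebra.
From mathcomp Require Import all_classical all_reals all_analysis.
From mathcomp Require Import measurable_realfun lra zify.
Import Order.TTheory GRing.Theory Num.Theory.
Import numFieldNormedType.Exports.
Local Open Scope classical_set_scope.
Local Open Scope ring_scope.

(* Since P lives on Z, its distribution function is a step function:
   F(s) = F(floor s) and F(s-) = F(ceil s - 1), while G is continuous.
   Symmetry about n/2 forces n to be an integer (otherwise the reflected
   lattice n - Z, disjoint from Z, would carry all the mass) and gives
   F(n - m) = 1 - F(m - 1) and G(n - x) = 1 - G(x).  The reflection
   x |-> n - x exchanges the deviation |F - G| with the left-limit deviation
   |F(.-) - G(.-)|, so only points right of the centre matter.  There, on
   each [m, m + 1) F is constant and G increasing, so the deviation is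
   controlled by its values at the integer endpoints, which are exactly the
   two integer conditions; the value of d comes from evaluating the
   symmetry relations at the centre. *)

Lemma odd_absz_double (j : int) : ~~ odd `|(j + j)%R|%N.
Proof. have : (`|(j + j)%R| %% 2 = 0)%N by lia. by rewrite modn2; case: odd. Qed.

Lemma odd_absz_double_add1 (j : int) : odd `|(j + j + 1)%R|%N.
Proof. have : (`|(j + j + 1)%R| %% 2 = 1)%N by lia. by rewrite modn2; case: odd. Qed.

Lemma floor_ceil_half (R : archiRealFieldType) (N : int) :
  let f := Num.floor (N%:~R / 2 : R) in
  (Num.ceil (N%:~R / 2 : R) = f /\ N = f + f) \/
  (Num.ceil (N%:~R / 2 : R) = f + 1 /\ N = f + f + 1).
Proof.
move=> f; have /andP[f1 f2] := floor_itv (N%:~R / 2 : R); rewrite -/f in f1 f2.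
have [eN|eN] : N = f + f \/ N = f + f + 1.
  suff : f + f <= N < f + f + 2 by lia.
  by rewrite -(ler_int R) -(ltr_int R) !intrD; apply/andP; split; lra.
- left; split => //; apply: ceil_def.
  rewrite eN intrD !intrB; apply/andP; split; lra.
- right; split => //; apply: ceil_def.
  rewrite eN addrK !intrD; apply/andP; split; lra.
Qed.

Section strict_deviation.
Variables (R : realType) (N fl cl : int) (F G : R -> R).
Hypotheses
  (half_split : (cl = fl /\ N = fl + fl) \/ (cl = fl + 1 /\ N = fl + fl + 1))
  (F_floor : forall x, F x = F (Num.floor x)%:~R)
  (F_left : forall s, left_lim F s = F (Num.ceil s - 1)%:~R)
  (G_left : forall s, left_lim G s = G s)
  (G_incr : {homo G : x y / x < y})
  (F_sym : forall m : int, F (N - m)%:~R = 1 - F (m - 1)%:~R)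
  (G_sym : forall x, G (N%:~R - x) = 1 - G x).

Local Notation d := (F fl%:~R - G fl%:~R).

Let fl_add_cl : fl + cl = N. Proof. by case: half_split => -[-> ->]; lia. Qed.

Let fl_le_cl : fl <= cl <= fl + 1. Proof. by case: half_split => -[-> _]; lia. Qed.

Let cl_reflect : (cl%:~R : R) = N%:~R - fl%:~R.
Proof. by rewrite -fl_add_cl intrD addrAC subrr add0r. Qed.

Let G_le {x y : R} : x <= y -> G x <= G y.
Proof. by rewrite le_eqVlt => /predU1P[->//|/G_incr/ltW]. Qed.

Let deviation_at_ceil : G cl%:~R - F (cl - 1)%:~R = d.
Proof.
rewrite cl_reflect G_sym; have := F_sym cl.
rewrite -fl_add_cl addrK; lra.
Qed.

Lemma deviation_floor_left_ceil : d = left_lim G cl%:~R - left_lim F cl%:~R.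
Proof. by rewrite G_left F_left intrKceil deviation_at_ceil. Qed.

Lemma left_deviation_reflect s :
  `|left_lim F s - left_lim G s| = `|F (N%:~R - s) - G (N%:~R - s)|.
Proof.
rewrite F_left G_left [F (_ - s)]F_floor.
have -> : Num.floor (N%:~R - s) = N - Num.ceil s.
  apply: floor_def; have /andP[c1 c2] := ceil_itv s.
  by move: c1 c2; rewrite !(intrD, intrN); lra.
by rewrite F_sym G_sym distrC; congr `|_|; lra.
Qed.

Section right_of_center.
Hypotheses
  (floor_cond : forall s : int, fl < s -> F s%:~R - G s%:~R < d)
  (ceil_cond : forall s : int, cl < s -> G s%:~R - F (s%:~R - 1) < d).

Let ceil_cond_int (s : int) : cl < s -> G s%:~R - F (s - 1)%:~R < d.
Proof. by rewrite intrB; exact: ceil_cond. Qed.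

Lemma deviation_lt_right_of_floor t : fl%:~R < t -> `|F t - G t| < d.
Proof.
move=> flt; rewrite F_floor; set m := Num.floor t.
have /andP[m_le_t t_lt_m1] := floor_itv t; rewrite -/m in m_le_t t_lt_m1.
have fl_le_m : fl <= m by rewrite floor_ge_int ltW.
rewrite ltr_norml; apply/andP; split.
- have := G_incr _ _ t_lt_m1; have [cl_lt_m1|] := ltP cl (m + 1).
    by have := ceil_cond_int _ cl_lt_m1; rewrite addrK; lra.
  move=> m1_le_cl; have em : cl = m + 1 by lia.
  by move: deviation_at_ceil; rewrite em addrK; lra.
- have [<-|fl_ne_m] := eqVneq fl m; first by have := G_incr _ _ flt; lra.
  have fl_lt_m : fl < m by rewrite lt_neqAle fl_ne_m.
  by have := floor_cond _ fl_lt_m; have := G_le m_le_t; lra.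
Qed.

Lemma left_deviation_lt_right_of_ceil u :
  cl%:~R < u -> `|left_lim F u - left_lim G u| < d.
Proof.
move=> clu; rewrite F_left G_left; set c := Num.ceil u.
have /andP[c1_lt_u u_le_c] := ceil_itv u; rewrite -/c in c1_lt_u u_le_c.
have cl_lt_c : cl < c by rewrite ceil_gt_int.
rewrite ltr_norml; apply/andP; split.
- by have := ceil_cond_int _ cl_lt_c; have := G_le u_le_c; lra.
- have := G_incr _ _ c1_lt_u; have [->|fl_ne_c1] := eqVneq (c - 1) fl; first lra.
  have fl_lt_c1 : fl < c - 1 by lia.
  by have := floor_cond _ fl_lt_c1; lra.
Qed.

End right_of_center.

Lemma strict_deviation_iff :
  (forall s : R, (s != fl%:~R -> `|F s - G s| < d) /\
                 (s != cl%:~R -> `|left_lim F s - left_lim G s| < d)) <->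
  (forall s : int, fl < s -> F s%:~R - G s%:~R < d) /\
  (forall s : int, cl < s -> G s%:~R - F (s%:~R - 1) < d).
Proof.
split.
- move=> dev; split=> s s_gt.
  + have [+ _] := dev s%:~R; rewrite eqr_int gt_eqF // => /(_ isT).
    by move/ltr_normlP => [].
  + have [_ +] := dev s%:~R; rewrite eqr_int gt_eqF // => /(_ isT).
    by rewrite F_left G_left intrKceil intrB => /ltr_normlP[]; lra.
- move=> [floor_cond ceil_cond] s.
  have right_floor := deviation_lt_right_of_floor floor_cond ceil_cond.
  have right_ceil := left_deviation_lt_right_of_ceil floor_cond ceil_cond.
  split=> s_ne.
  + have [s_lt|s_gt|/eqP] := ltgtP s fl%:~R; last by rewrite (negbTE s_ne).
    * have := left_deviation_reflect (N%:~R - s); rewrite subKr => <-.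
      by apply: right_ceil; have := cl_reflect; lra.
    * exact: right_floor.
  + have [s_lt|s_gt|/eqP] := ltgtP s cl%:~R; last by rewrite (negbTE s_ne).
    * rewrite left_deviation_reflect; apply: right_floor.
      by have := cl_reflect; lra.
    * exact: right_ceil.
Qed.

End strict_deviation.

Section distribution_function.
Context {R : realType}.

Lemma left_lim_continuous (f : R -> R) :
  continuous f -> forall s, left_lim f s = f s.
Proof. by move=> fc s; apply: cvg_lim => //; apply: cvg_at_left_filter; exact: fc. Qed.

Lemma measurable_intset : measurable (@intset R).
Proof.
have -> : @intset R = \bigcup_(k : int) [set k%:~R].
  by apply/seteqP; split=> x /= [k]; [exists k | move=> _ ->; exists k].
by apply: countable_bigcupT_measurable => // k; exact: measurable_set1.
Qed.

Lemma measurable_reflect (c : R) (A : set R) :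
  measurable A -> measurable ((fun x => c - x) @^-1` A).
Proof.
move=> mA; rewrite -[_ @^-1` _]setTI.
by apply: measurable_funB => //; exact: measurable_cst.
Qed.

Variable P : probability R R.

Lemma fine_measure_le (A B : set R) : measurable A -> measurable B ->
  A `<=` B -> fine (P A) <= fine (P B).
Proof.
move=> mA mB AB; apply: fine_le; try exact: fin_num_measure.
by apply: le_measure; rewrite ?inE.
Qed.

Lemma distfun_split_atom x :
  distfun P x = fine (P [set` `]-oo, x[]) + fine (P [set x]).
Proof.
rewrite /distfun -fineD ?fin_num_measure// -measureU//; last first.
  by rewrite -subset0 => y [/=]; rewrite in_itv /= => + yx; rewrite yx ltxx.
congr (fine (P _)); apply/seteqP; split=> y /=; rewrite !in_itv /=.
  by rewrite le_eqVlt => /predU1P[->|->]; [right|left].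
by case=> [/ltW|->].
Qed.

Lemma distfun_reflect c : symmetric_about P (c / 2) ->
  forall x, distfun P (c - x) = 1 - fine (P [set` `]-oo, x[]).
Proof.
move=> Psym x; rewrite /distfun Psym // (_ : _ @^-1` _ = [set` `[x, +oo[]).
  by rewrite -setCitvl probability_setC // fineB ?fin_num_measure.
by apply/seteqP; split=> y /=; rewrite !in_itv /= andbT; lra.
Qed.

Lemma continuous_distfun_lt : continuous (distfun P) ->
  forall x, fine (P [set` `]-oo, x[]) = distfun P x.
Proof.
move=> Fc x; apply/eqP; rewrite eq_le; apply/andP; split.
  by apply: fine_measure_le => // y /=; rewrite !in_itv /= => /ltW.
rewrite -(left_lim_continuous _ Fc); apply: limr_le.
  by apply/cvg_ex; exists (distfun P x); apply: cvg_at_left_filter; exact: Fc.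
near=> t; apply: fine_measure_le => // y /=; rewrite !in_itv /= => /le_lt_trans; apply.
by near: t; exact: nbhs_left_lt.
Unshelve. all: by end_near.
Qed.

Section integer_valued.
Hypothesis PZ : P (@intset R) = 1%E.

Lemma measure_setI_intset (A : set R) : measurable A -> P A = P (A `&` @intset R).
Proof.
move=> mA; have mZ := measurable_intset.
have PDZ : P (A `\` @intset R) = 0%E.
  apply/eqP; rewrite eq_le measure_ge0 andbT.
  have <- : P (~` @intset R) = 0%E by rewrite probability_setC // PZ subee.
  by apply: le_measure; rewrite ?inE //; [exact: measurableD | exact: measurableC].
by rewrite (measureDI P mA mZ) -[X in (X + _)%E]/(P (A `\` @intset R)) PDZ add0e.
Qed.

Lemma measure_eq_intset (A B : set R) : measurable A -> measurable B ->
  A `&` @intset R = B `&` @intset R -> P A = P B.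
Proof. by move=> mA mB AB; rewrite measure_setI_intset // AB -measure_setI_intset. Qed.

Lemma distfun_floor x : distfun P x = distfun P (Num.floor x)%:~R.
Proof.
congr fine; apply: measure_eq_intset => //; apply/seteqP.
by split=> y [/=]; rewrite !in_itv /= => yx [k yk]; split; try exists k;
  move: yx; rewrite yk // ler_int floor_ge_int.
Qed.

Lemma measure_itvNy_lt_int (m : int) :
  fine (P [set` `]-oo, m%:~R[]) = distfun P (m - 1)%:~R.
Proof.
congr fine; apply: measure_eq_intset => //; apply/seteqP.
by split=> y [/=]; rewrite !in_itv /= => yx [k yk]; split; try exists k;
  move: yx; rewrite yk // ltr_int ler_int; lia.
Qed.

Lemma left_lim_distfun_int s :
  left_lim (distfun P) s = distfun P (Num.ceil s - 1)%:~R.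
Proof.
apply: norm_lim_near_cst; near=> x.
rewrite distfun_floor (_ : Num.floor x = Num.ceil s - 1) //.
apply: floor_def; rewrite subrK; apply/andP; split.
  by apply: ltW; near: x; exact: nbhs_left_gt (ceilB1_lt s).
by apply: (lt_le_trans _ (ceil_ge s)); near: x; exact: nbhs_left_lt.
Unshelve. all: by end_near.
Qed.

(* Symmetry moves the integers onto c - Z, which must then carry all the mass. *)
Lemma symmetric_center_int c : symmetric_about P (c / 2) -> exists k : int, c = k%:~R.
Proof.
move=> Psym; apply: contrapT => c_notZ.
have mZ := measurable_intset.
have mB := measurable_reflect c _ mZ.
have := Psym _ mZ; rewrite PZ (_ : 2 * (c / 2) = c); last by rewrite mulrC divfK.
rewrite measure_setI_intset //.
suff -> : (fun x => c - x) @^-1` @intset R `&` @intset R = set0.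
  by move=> P0; have := measure0 P; rewrite -[LHS]/(P set0) -P0 => /eqP; rewrite eqe oner_eq0.
rewrite -subset0 => x [/= [k ck] [j xj]]; apply: c_notZ; exists (k + j).
by rewrite intrD -ck -xj subrK.
Qed.

Section symmetric.
Context {N : int}.
Hypothesis Psym : symmetric_about P (N%:~R / 2).

Lemma distfun_int_sym m : distfun P (N - m)%:~R = 1 - distfun P (m - 1)%:~R.
Proof. by rewrite intrB distfun_reflect // measure_itvNy_lt_int. Qed.

Lemma distfun_int_center_even f :
  N = f + f -> distfun P f%:~R - 2^-1 = 2^-1 * fine (P [set f%:~R]).
Proof.
move=> Nff; have := distfun_int_sym f; rewrite Nff addrK.
by have := distfun_split_atom f%:~R; rewrite measure_itvNy_lt_int; lra.
Qed.

Lemma distfun_int_center_odd f : N = f + f + 1 -> distfun P f%:~R = 2^-1.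
Proof.
move=> Nff1; have := distfun_int_sym (f + 1).
by rewrite Nff1 addrK (_ : f + f + 1 - (f + 1) = f); [lra | lia].
Qed.

End symmetric.
End integer_valued.

Lemma continuous_distfun_sym c : continuous (distfun P) -> symmetric_about P (c / 2) ->
  forall x, distfun P (c - x) = 1 - distfun P x.
Proof. by move=> Fc Psym x; rewrite distfun_reflect // continuous_distfun_lt. Qed.

End distribution_function.

Theorem lemma1p6 (R : realType) (P Q : probability R R) (n : R) :
  P (@intset R) = 1%E ->
  continuous (distfun Q) ->
  {homo distfun Q : x y / x < y} ->
  symmetric_about P (n / 2) ->
  symmetric_about Q (n / 2) ->
  let F := distfun P in
  let G := distfun Q in
  let fl : R := (Num.floor (n / 2))%:~R in
  let cl : R := (Num.ceil (n / 2))%:~R in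
  let d := F fl - G fl in
  exists k : int, n = k%:~R /\
    d = left_lim G cl - left_lim F cl /\
    (if odd `|k|%N then d = G ((n + 1) / 2) - 2^-1
     else d = 2^-1 * fine (P [set n / 2])) /\
    ((forall s : R,
        (s != fl -> `|F s - G s| < d) /\
        (s != cl -> `|left_lim F s - left_lim G s| < d))
     <->
     ((forall s : int, Num.floor (n / 2) < s -> F s%:~R - G s%:~R < d) /\
      (forall s : int, Num.ceil (n / 2) < s -> G s%:~R - F (s%:~R - 1) < d))).
Proof.
move=> PZ Gc Gincr Psym Qsym F G fl cl d.
have [N nN] := symmetric_center_int P PZ _ Psym; subst n.
have half := floor_ceil_half R N.
have F_sym := distfun_int_sym P PZ Psym.
have G_sym := continuous_distfun_sym Q _ Gc Qsym.
have F_left := left_lim_distfun_int P PZ.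
have G_left := left_lim_continuous _ Gc.
exists N; split=> //; split.
  exact: deviation_floor_left_ceil half F_left G_left F_sym G_sym.
split; last first.
  exact: strict_deviation_iff half (distfun_floor P PZ) F_left G_left Gincr F_sym G_sym.
rewrite /d /fl /F /G; set f := Num.floor _ in half *.
have := G_sym f%:~R; case: half => -[_ Nf]; rewrite Nf.
- rewrite (negbTE (odd_absz_double f)) (_ : (f + f)%:~R / 2 = f%:~R); last first.
    by rewrite intrD; lra.
  by rewrite -(distfun_int_center_even P PZ Psym f Nf) intrD addrK; lra.
- rewrite (odd_absz_double_add1 f) (distfun_int_center_odd P PZ Psym f Nf).
  rewrite (_ : ((f + f + 1)%:~R + 1) / 2 = (f + 1)%:~R); last by rewrite !intrD; lra.
  by rewrite -intrB (_ : f + f + 1 - f = f + 1); [lra | lia].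
Qed.
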